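(* Let $q,N\in\mathbb{N}$ with $q,N\ge1$ and $p\in(0,1)$. Choose $L\in\mathbb{N}$ and $\varepsilon>0$ with $$L\ge\frac{2nD(q+A+C+2)^n}{(1-p)C^n}\quad\text{and}\quad\varepsilon\le\frac1{2NL}.$$ If $s$ is chosen uniformly at random from $S=\frac1{NL}\{0,\dots,L-1\}^n$, then $\Pr\big(G(s)\cap H_{\mathrm{grid}}(\varepsilon)=\emptyset\big)\ge p$, where $G(s)=\{s+\frac1Nv:v\in\{0,\dots,qN-1\}^n\}$.
   Context: An $n$-dimensional infrastructure consists of a full-rank lattice $\Lambda\subset\mathbb{R}^n$, a finite non-empty set $X$, an injective map $d:X\to\mathbb{R}^n/\Lambda$, and a set $\mathrm{fRep}\subseteq X\times\mathbb{R}^n$ with $X\times\{0\}\subseteq\mathrm{fRep}$ such that $\Phi:\mathrm{fRep}\to\mathbb{R}^n/\Lambda$, $(x,t)\mapsto d(x)+t$, is a bijection. Let $\pi:\mathbb{R}^n\to\mathbb{R}^n/\Lambda$ be the projection, $\hat X=\pi^{-1}(d(X))$, and for $\hat x\in\hat X$ let $\hat V_{\hat x}=\{\hat x+t:(d^{-1}(\pi(\hat x)),t)\in\mathrm{fRep}\}$; these sets partition $\mathbb{R}^n$. Standing assumptions: the infrastructure is cornered (for each $\hat x$, $\hat x\in\hat V_{\hat x}$ and $\{r:\hat x\le r\le t\}\subseteq\hat V_{\hat x}$ for all $t\in\hat V_{\hat x}$, componentwise order); (A1) there is $A>0$ with $\hat V_{\hat x}\subseteq\hat x+[0,A]^n$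 for all $\hat x$; (A2) there are $C,D>0$ such that $(r+[0,C]^n)\cap\hat X$ has at most $D$ elements for every $r\in\mathbb{R}^n$. $\mathbb{N}=\{0,1,2,\dots\}$, and $$H_{\mathrm{grid}}(\varepsilon)=\bigcup_{\hat x\in\hat X}\Big(\big(\tfrac1N\mathbb{N}^n+\partial\hat V_{\hat x}\big)\cap\overline{\hat V_{\hat x}}\Big)+[-\varepsilon,\varepsilon]^n,$$ with $\partial$ the topological boundary and $\overline{\,\cdot\,}$ the closure. *)

From HB Require Import structures.
From mathcomp Require Import all_boot all_order all_algebra.
From mathcomp Require Import all_classical all_reals all_analysis.
Set Implicit Arguments. Unset Strict Implicit. Unset Printing Implicit Defensive.
Import Order.TTheory GRing.Theory Num.Theory.
Import numFieldNormedType.Exports.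
Local Open Scope classical_set_scope.
Local Open Scope ring_scope.

(* R^n is modelled as row vectors 'rV[R]_n over a realType R, with the
   (product = Euclidean) topology of MathComp-Analysis. *)

Section Infrastructure.
Context {R : realType} {n : nat}.

Definition lattice (B : 'M[R]_n) : set 'rV[R]_n :=
  [set map_mx (fun k : int => k%:~R) z *m B | z in [set: 'rV[int]_n]].

Definition congr_mod (B : 'M[R]_n) (x y : 'rV[R]_n) : Prop := lattice B (x - y).

(* Elements of R^n/Lambda are represented by representatives in R^n;
   d x is a representative of the class d(x). *)
Definition is_infrastructure (B : 'M[R]_n) (X : finType) (d : X -> 'rV[R]_n)
    (fRep : set (X * 'rV[R]_n)) : Prop :=
  [/\ B \in unitmx /\ (0 < #|X|)%N,
      (forall x y, congr_mod B (d x) (d y) -> x = y),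
      (forall x, fRep (x, 0)),
      (forall r, exists xt, fRep xt /\ congr_mod B (d xt.1 + xt.2) r)
    & (forall xt yt, fRep xt -> fRep yt ->
         congr_mod B (d xt.1 + xt.2) (d yt.1 + yt.2) -> xt = yt)].

Definition Xhat (B : 'M[R]_n) (X : finType) (d : X -> 'rV[R]_n) : set 'rV[R]_n :=
  [set y | exists x : X, congr_mod B y (d x)].

Definition Vhat (B : 'M[R]_n) (X : finType) (d : X -> 'rV[R]_n)
    (fRep : set (X * 'rV[R]_n)) (xh : 'rV[R]_n) : set 'rV[R]_n :=
  [set xh + t | t in [set t | exists x : X, congr_mod B xh (d x) /\ fRep (x, t)]].

Definition leV (a b : 'rV[R]_n) : Prop := forall i, a 0 i <= b 0 i.

Definition box (c : R) : set 'rV[R]_n := [set v | forall i, 0 <= v 0 i <= c].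

Definition cornered (B : 'M[R]_n) (X : finType) (d : X -> 'rV[R]_n) (fRep : set (X * 'rV[R]_n)) : Prop :=
  forall xh, Xhat B d xh ->
    Vhat B d fRep xh xh /\
    (forall t, Vhat B d fRep xh t ->
       forall r, leV xh r -> leV r t -> Vhat B d fRep xh r).

Definition assumptionA1 (B : 'M[R]_n) (X : finType) (d : X -> 'rV[R]_n) (fRep : set (X * 'rV[R]_n)) (A : R) : Prop :=
  0 < A /\ forall xh, Xhat B d xh ->
    Vhat B d fRep xh `<=` [set xh + v | v in box A].

Definition assumptionA2 (B : 'M[R]_n) (X : finType) (d : X -> 'rV[R]_n) (C D : R) : Prop :=
  [/\ 0 < C, 0 < D &
    forall (r : 'rV[R]_n) (s : seq 'rV[R]_n), uniq s ->
      (forall y, y \in s -> [set r + v | v in box C] y /\ Xhat B d y) ->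
      (size s)%:R <= D].

Definition boundary (S : set 'rV[R]_n) : set 'rV[R]_n := closure S `\` interior S.

Definition gridN (N : nat) : set 'rV[R]_n :=
  [set \row_i ((k i)%:R / N%:R) | k in [set: 'I_n -> nat]].

Definition Hgrid (B : 'M[R]_n) (X : finType) (d : X -> 'rV[R]_n)
    (fRep : set (X * 'rV[R]_n)) (N : nat) (eps : R) : set 'rV[R]_n :=
  [set y | exists h e,
     y = h + e /\
     (exists xh, Xhat B d xh /\
        (exists g b, gridN N g /\ boundary (Vhat B d fRep xh) b /\ h = g + b) /\
        closure (Vhat B d fRep xh) h) /\
     (forall i, - eps <= e 0 i <= eps)].

End Infrastructure.

From mathcomp Require Import all_boot all_order all_algebra.
From mathcomp Require Import all_classical all_reals all_analysis.
From mathcomp Require Import zify ring lra.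
Import Order.TTheory GRing.Theory Num.Theory.
Import numFieldNormedType.Exports.
Local Open Scope classical_set_scope.
Local Open Scope ring_scope.
Set Implicit Arguments. Unset Strict Implicit.

(* A point of the shifted grid [G(s)] lying in [H_grid(eps)] is within [eps]
   of a point [h = g + b] with [g] in [(1/N) N^n] and [b] on the boundary of a
   cell [V_xh].  Since the cornered cells partition [R^n], the cell containing
   [h + dl] has a corner [w] that is within [dl] of [h] in some coordinate [i],
   unless it is [V_xh] itself; then [b] lies on a lower face of [V_xh] and
   [h_i - w_i = g_i] is a multiple of [1/N].  Either way [s_i] is within
   [1/(NL)] of [w_i] modulo [1/N], which allows at most two of the [L] values
   of the [i]-th coordinate of [s].  The corners [w] lie in a box of side
   [q + A + 2], so (A2) bounds their number by [D ((q + A + C + 2) / C)^n], and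
   a union bound over [w] and [i] leaves at most a fraction [1 - p] of bad
   shifts. *)

Section Cells.
Variables (R : realType) (n : nat) (B : 'M[R]_n).
Variables (X : finType) (d : X -> 'rV[R]_n) (fRep : set (X * 'rV[R]_n)).
Hypothesis inf : is_infrastructure B d fRep.

Lemma latticeN x : lattice B x -> lattice B (- x).
Proof.
case=> z _ <-; exists (- z) => //.
by rewrite (map_mxN (intr : int -> R)) mulNmx.
Qed.

Lemma latticeD x y : lattice B x -> lattice B y -> lattice B (x + y).
Proof.
case=> z _ <-; case=> w _ <-; exists (z + w) => //.
by rewrite (map_mxD (intr : int -> R)) mulmxDl.
Qed.

Lemma Vhat_cover z : exists2 xh, Xhat B d xh & Vhat B d fRep xh z.
Proof.
have [_ _ _ onto _] := inf; have [[x t] [fxt]] := onto z.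
rewrite /congr_mod /= => /latticeN.
rewrite opprB opprD addrA addrAC => Xzt.
by exists (z - t); [exists x | exists t; [exists x | rewrite subrK]].
Qed.

Lemma Vhat_inj xh wh z : Vhat B d fRep xh z -> Vhat B d fRep wh z -> xh = wh.
Proof.
move=> [t [x [xhx fxt]] <-] [t' [x' [whx' fxt']] ezt].
have whE : wh = xh + t - t' by rewrite -ezt addrK.
have : congr_mod B (d x + t) (d x' + t').
  rewrite /congr_mod (_ : _ - _ = - (xh - d x) + (wh - d x')).
    exact: latticeD (latticeN xhx) whx'.
  by rewrite whE; apply/rowP => i; rewrite !mxE; ring.
have [_ _ _ _ injPhi] := inf.
by case/(injPhi (x, t) (x', t') fxt fxt') => _ et; rewrite whE -et addrK.
Qed.

End Cells.

Section Boxes.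
Variables (R : realType) (n : nat).

Lemma ball_coord (x y : 'rV[R]_n) (e : R) (i : 'I_n) : ball x e y -> `|x 0 i - y 0 i| < e.
Proof. by case=> _; apply. Qed.

Lemma closure_sub_box (S : set 'rV[R]_n) (a b : 'I_n -> R) :
  S `<=` [set z | forall i, a i <= z 0 i <= b i] ->
  closure S `<=` [set z | forall i, a i <= z 0 i <= b i].
Proof.
move=> Sab z clz i; apply/andP; split; rewrite leNgt; apply/negP => zi.
- have e0 : 0 < a i - z 0 i by rewrite subr_gt0.
  have [w [/Sab/(_ i)/andP[? ?] /(ball_coord i)]] := clz _ (nbhsx_ballx z _ e0).
  by rewrite ltr_norml => /andP[? ?]; lra.
- have e0 : 0 < z 0 i - b i by rewrite subr_gt0.
  have [w [/Sab/(_ i)/andP[? ?] /(ball_coord i)]] := clz _ (nbhsx_ballx z _ e0).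
  by rewrite ltr_norml => /andP[? ?]; lra.
Qed.

Lemma interior_open_box (S : set 'rV[R]_n) (a b : 'I_n -> R) (x : 'rV[R]_n) :
  (forall z : 'rV[R]_n, (forall i, a i < z 0 i < b i) -> S z) ->
  (forall i, a i < x 0 i < b i) -> interior S x.
Proof.
move=> abS xab; apply: (filterS abS).
apply: (@filter_forall _ 'I_n (fun i (z : 'rV[R]_n) => a i < z 0 i < b i) (nbhs x) _) => i.
have /andP[ax xb] := xab i.
apply/nbhs_ballP; exists (Order.min (x 0 i - a i) (b i - x 0 i)).
  by rewrite /= lt_min !subr_gt0 ax xb.
move=> z /(ball_coord i); rewrite lt_min !ltr_norml => /andP[/andP[? ?] /andP[? ?]].
by apply/andP; split; lra.
Qed.

End Boxes.

Section Corners.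
Variables (R : realType) (n : nat) (B : 'M[R]_n).
Variables (X : finType) (d : X -> 'rV[R]_n) (fRep : set (X * 'rV[R]_n)) (A : R).
Hypotheses (inf : is_infrastructure B d fRep) (corn : cornered B d fRep).
Hypothesis A1 : assumptionA1 B d fRep A.

Local Notation V := (Vhat B d fRep).
Implicit Types (xh wh h b x y z : 'rV[R]_n).

Lemma Vhat_sub_box xh z : Xhat B d xh -> V xh z ->
  forall i, xh 0 i <= z 0 i <= xh 0 i + A.
Proof.
move=> Xxh Vz i; have [_ /(_ xh Xxh z Vz) [v vA <-]] := A1.
by rewrite mxE; have /andP[? ?] := vA i; apply/andP; split; lra.
Qed.

Lemma closure_Vhat_sub_box xh z : Xhat B d xh -> closure (V xh) z ->
  forall i, xh 0 i <= z 0 i <= xh 0 i + A.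
Proof.
move=> Xxh; apply: (@closure_sub_box _ _ _ (fun i => xh 0 i) (fun i => xh 0 i + A)).
by move=> w; apply: Vhat_sub_box.
Qed.

Lemma interior_Vhat xh z x : Xhat B d xh -> V xh z ->
  (forall i, xh 0 i < x 0 i < z 0 i) -> interior (V xh) x.
Proof.
move=> Xxh Vz; apply: (@interior_open_box _ _ _ (fun i => xh 0 i) (fun i => z 0 i)).
by move=> y xyz; apply: ((corn Xxh).2 z Vz) => i; have /andP[? ?] := xyz i; exact: ltW.
Qed.

Lemma boundary_Vhat_lower_face xh b z : Xhat B d xh -> boundary (V xh) b ->
  V xh z -> (forall i, b 0 i < z 0 i) -> exists i, b 0 i = xh 0 i.
Proof.
move=> Xxh [clb notint] Vz bz; apply: contrapT => noface.
apply: notint; apply: (interior_Vhat Xxh Vz) => i.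
have /andP[xb _] := closure_Vhat_sub_box Xxh clb i.
rewrite bz andbT lt_neqAle xb andbT; apply/eqP => xbE.
by apply: noface; exists i.
Qed.

(* The point [h + dl] lies in some cell; if its corner is strictly below [h] in
   every coordinate, [h] is interior to that cell, which must then be the cell
   whose closure contains [h]. *)
Lemma cell_corner_near xh h dl : Xhat B d xh -> closure (V xh) h -> 0 < dl ->
  exists2 wh, Xhat B d wh /\ V wh (h + const_mx dl) &
    (exists i, h 0 i <= wh 0 i) \/ wh = xh.
Proof.
move=> Xxh clh dl0; have [wh Xwh Vz] := Vhat_cover inf (h + const_mx dl).
exists wh => //; case: (pselect (exists i, h 0 i <= wh 0 i)) => [|nle]; [by left|right].
have inth : interior (V wh) h.
  apply: (interior_Vhat Xwh Vz) => i; rewrite !mxE ltrDl dl0 andbT ltNge.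
  by apply/negP => hw; apply: nle; exists i.
have [w [Vxw Vww]] := clh _ inth.
by rewrite (Vhat_inj inf Vxw Vww).
Qed.

Lemma Hgrid_near_corner N eps y dl : Hgrid B d fRep N eps y -> 0 < dl ->
  exists2 wh, Xhat B d wh &
    (forall j, y 0 j - A - eps <= wh 0 j <= y 0 j + dl + eps) /\
    exists i (m : int), `|y 0 i - wh 0 i - m%:~R / N%:R| <= dl + eps.
Proof.
case=> h [e [ye [[xh [Xxh [[g [b [[k _ gE] [bb hE]]]] clh]]] He]]] dl0.
have yE j : y 0 j = h 0 j + e 0 j by rewrite ye mxE.
have hgb j : h 0 j = (k j)%:R / N%:R + b 0 j by rewrite hE -gE !mxE.
have [wh [Xwh Vz] near] := cell_corner_near Xxh clh dl0.
have zwh j : wh 0 j <= h 0 j + dl <= wh 0 j + A.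
  by have := Vhat_sub_box Xwh Vz j; rewrite !mxE.
exists wh => //; split.
  move=> j; have /andP[? ?] := zwh j; have /andP[? ?] := He j.
  by rewrite yE; apply/andP; split; lra.
case: near => [[i hwi]|whE]; last subst wh.
  exists i, 0; rewrite mul0r subr0 yE ler_norml.
  by have /andP[? ?] := zwh i; have /andP[? ?] := He i; apply/andP; split; lra.
have [i bi] : exists i, b 0 i = xh 0 i.
  apply: (boundary_Vhat_lower_face Xxh bb Vz) => j.
  have kN : 0 <= (k j)%:R / N%:R :> R by rewrite divr_ge0.
  by rewrite !mxE hgb; lra.
exists i, (k i)%:Z; rewrite yE hgb -bi -pmulrn.
by have /andP[? ?] := He i; rewrite ler_norml; apply/andP; split; lra.
Qed.

End Corners.

Definition shifts_near {R : realType} (N L : nat) (c : R) : pred 'I_L :=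
  [pred k : 'I_L | `[< exists m : int,
     `|(k : nat)%:R / (N * L)%:R + m%:~R / N%:R - c| < 1 / (N * L)%:R >]].
Arguments shifts_near {R} N L c.

Section Shifts.
Variable R : realType.

Lemma int_near_floor (x : R) (a : int) :
  `|a%:~R - x| < 1 -> a = Num.floor x \/ a = Num.floor x + 1.
Proof.
rewrite ltr_norml => /andP[lo hi]; case: (lerP a%:~R x) => ax; [left|right].
  by apply/esym/eqP; rewrite floor_eq intrD ax /=; lra.
have /eqP-> : Num.floor x == a - 1 by rewrite floor_eq subrK intrB ltW //=; lra.
by rewrite subrK.
Qed.

(* [k + m L] is an integer within [1] of [c N L]. *)
Lemma shifts_near_mod (N L : nat) (c : R) (k : 'I_L) : (0 < N)%N -> (0 < L)%N ->
  k \in shifts_near N L c ->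
  exists2 a : int, a = Num.floor (c * (N * L)%:R) \/ a = Num.floor (c * (N * L)%:R) + 1
                 & (k : nat)%:Z = (a %% L%:Z)%Z.
Proof.
move=> N0 L0 /asboolP [m km]; exists ((k : nat)%:Z + m * L%:Z); last first.
  by rewrite addrC modzMDl modz_small // ltz_nat ltn_ord.
have NL0 : 0 < (N * L)%:R :> R by rewrite ltr0n muln_gt0 N0.
apply: int_near_floor.
rewrite (_ : _ - _ = ((k : nat)%:R / (N * L)%:R + m%:~R / N%:R - c) * (N * L)%:R).
  by rewrite normrM (gtr0_norm NL0) -ltr_pdivlMr.
rewrite intrD intrM -!pmulrn natrM; field.
by rewrite !pnatr_eq0 -!lt0n N0.
Qed.

Lemma card_shifts_near (N L : nat) (c : R) : (0 < N)%N -> (0 < L)%N ->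
  (#|shifts_near N L c| <= 2)%N.
Proof.
move=> N0 L0; pose f := Num.floor (c * (N * L)%:R).
pose r := (f %% L%:Z)%Z; pose r' := ((f + 1) %% L%:Z)%Z.
have kr k : k \in shifts_near N L c -> (k : nat)%:Z = r \/ (k : nat)%:Z = r'.
  by case/(shifts_near_mod N0 L0) => a [] -> ->; [left|right].
have inj : {in shifts_near N L c &, injective (fun k : 'I_L => (k : nat)%:Z == r)}.
  move=> k1 k2 /kr e1 /kr e2 /= same; apply/val_inj/eqP; rewrite -eqz_nat.
  by case: e1 e2 same => -> [] ->; rewrite ?eqxx // => /esym/eqP ->.
rewrite -(card_in_imset inj); apply: leq_trans (max_card _) _.
by rewrite card_bool.
Qed.

End Shifts.

Lemma card_ffun_coord (I T : finType) (i : I) (P : pred T) :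
  #|[pred f : {ffun I -> T} | f i \in P]| = (#|P| * #|T| ^ #|I|.-1)%N.
Proof.
pose F j := if j == i then P else predT.
have -> : #|[pred f : {ffun I -> T} | f i \in P]| = #|family F|.
  apply: eq_card => f; rewrite !inE; apply/idP/familyP => [fi j|/(_ i)].
    by rewrite /F; case: eqP => [->|].
  by rewrite /F eqxx.
rewrite card_family foldrE big_image (bigD1 i) //= /F eqxx.
rewrite (eq_bigr (fun=> #|T|)) => [|j /negbTE -> //].
by rewrite prod_nat_const cardC1.
Qed.

Lemma card_hit_coord_le (U : eqType) (n L c : nat) (W : seq U)
    (S : U -> 'I_n -> pred 'I_L) (P : pred {ffun 'I_n -> 'I_L}) :
  (forall w i, #|S w i| <= c)%N ->
  (forall k, P k -> exists2 w, w \in W & exists i, k i \in S w i) ->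
  (#|P| <= size W * (n * (c * L ^ n.-1)))%N.
Proof.
move=> Sc hit.
pose hits (k : {ffun 'I_n -> 'I_L}) := (\sum_(w <- W) \sum_(i < n) (k i \in S w i))%N.
apply: (@leq_trans (\sum_(k : {ffun 'I_n -> 'I_L}) hits k)%N).
  rewrite -sum1_card big_mkcond; apply: leq_sum => k _; case: ifP => // Pk.
  have [w Ww [i hi]] := hit k Pk.
  by rewrite /hits (big_rem w Ww) (bigD1 i) //= hi -addnA leq_addr.
rewrite exchange_big /= -[X in (_ <= X)%N]mulnC -iter_addn_0 -count_predT -big_const_seq.
apply: leq_sum => w _; rewrite exchange_big /=.
apply: (@leq_trans (\sum_(i < n) (c * L ^ n.-1))%N); last first.
  by rewrite sum_nat_const card_ord.
apply: leq_sum => i _.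
rewrite (_ : \sum_k _ = #|[pred k : {ffun 'I_n -> 'I_L} | k i \in S w i]|)%N.
  by rewrite card_ffun_coord !card_ord leq_mul2r Sc orbT.
rewrite -sum1_card [RHS]big_mkcond; apply: eq_bigr => k _.
by rewrite inE; case: (_ \in _).
Qed.

Lemma size_eq_sum_count (T : eqType) (J : finType) (f : T -> J) (s : seq T) :
  size s = (\sum_(j : J) count (fun x => j == f x) s)%N.
Proof.
under eq_bigr do rewrite -sum1_count.
rewrite (exchange_big_dep predT) //= -sum1_size.
by apply: eq_bigr => x _; rewrite big_pred1_eq.
Qed.

Section RealGrid.
Variable R : realType.

Lemma truncn_bucket (C lo len x : R) : 0 < C -> lo <= x <= lo + len ->
  (Num.truncn ((x - lo) / C) <= Num.truncn (len / C))%N /\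
  0 <= x - (lo + C * (Num.truncn ((x - lo) / C))%:R) <= C.
Proof.
move=> C0 /andP[lox xlen]; set u := (x - lo) / C.
have u0 : 0 <= u by rewrite divr_ge0 // ?subr_ge0 // ltW.
split; first by apply: le_truncn; rewrite ler_pM2r ?invr_gt0 // lerBlDl.
have /andP[tu ut] := truncn_itv u0; rewrite -natr1 in ut.
have xE : x - lo = u * C by rewrite /u mulrVK ?unitfE ?gt_eqF.
by apply/andP; split; nra.
Qed.

Lemma truncn_succ_le (x : R) : 0 <= x -> (Num.truncn x).+1%:R <= x + 1.
Proof. by move=> x0; rewrite -natr1 lerD2r truncn_le. Qed.

Lemma shift_point_range (q N L : nat) (k : 'I_L) (v : 'I_(q * N)) : (0 < N)%N ->
  0 <= ((k : nat)%:R / (N * L)%:R + (v : nat)%:R / N%:R : R) <= q%:R.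
Proof.
move=> N0; have L0 : (0 < L)%N by apply: leq_ltn_trans (ltn_ord k).
have NL0 : 0 < (N * L)%:R :> R by rewrite ltr0n muln_gt0 N0.
rewrite (_ : _ + _ = ((k : nat) + (v : nat) * L)%:R / (N * L)%:R); last first.
  by rewrite natrD !natrM; field; rewrite !pnatr_eq0 -!lt0n N0 L0.
apply/andP; split; first by rewrite divr_ge0 // ltW.
rewrite ler_pdivrMr // -natrM ler_nat mulnA.
by have := ltn_ord k; have := ltn_ord v; nia.
Qed.

End RealGrid.

Section LatticePointCount.
Variables (R : realType) (n : nat) (B : 'M[R]_n) (X : finType) (d : X -> 'rV[R]_n).
Variables (C D : R).
Hypothesis A2 : assumptionA2 B d C D.

Let inbox (lo len : R) (w : 'rV[R]_n) := forall j, lo <= w 0 j <= lo + len.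

(* Sort the points by the [C]-subbox containing them: there are
   [(truncn (len / C)).+1 ^ n] subboxes and (A2) bounds each class by [D]. *)
Lemma size_Xhat_box (lo len : R) (s : seq 'rV[R]_n) : 0 <= len -> uniq s ->
  (forall w, w \in s -> Xhat B d w /\ inbox lo len w) ->
  (size s)%:R <= D * ((len + C) / C) ^+ n.
Proof.
have [C0 D0 A2D] := A2; move=> len0 us sbox.
set t := Num.truncn (len / C).
pose idx (w : 'rV[R]_n) : {ffun 'I_n -> 'I_t.+1} :=
  [ffun j => inord (Num.truncn ((w 0 j - lo) / C))].
pose corner (J : {ffun 'I_n -> 'I_t.+1}) := \row_j (lo + C * (J j : nat)%:R).
apply: (@le_trans _ _ (D * t.+1%:R ^+ n)).
  rewrite (size_eq_sum_count idx s) natr_sum.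
  apply: (@le_trans _ _ (\sum_(J : {ffun 'I_n -> 'I_t.+1}) D)); last first.
    by rewrite sumr_const card_ffun !card_ord -natrX mulr_natr.
  apply: ler_sum => J _; rewrite -size_filter.
  apply: (A2D (corner J)); first exact: filter_uniq.
  move=> y; rewrite mem_filter => /andP[/eqP yJ /sbox[Xy ybox]]; split=> //.
  exists (y - corner J); last by rewrite addrC subrK.
  move=> j; have [tt yC] := truncn_bucket C0 (ybox j).
  by rewrite !mxE yJ ffunE inordK ?ltnS.
apply: ler_wpM2l; first exact: ltW.
apply: lerXn2r; rewrite ?nnegrE ?ler0n //.
  by apply: divr_ge0; lra.
by rewrite mulrDl divff ?gt_eqF // truncn_succ_le // divr_ge0 // ltW.
Qed.

Lemma Xhat_box_enum (lo len : R) : 0 <= len ->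
  exists s : seq 'rV[R]_n,
    (forall w, Xhat B d w -> inbox lo len w -> w \in s) /\
    (size s)%:R <= D * ((len + C) / C) ^+ n.
Proof.
move=> len0; set M := D * _.
pose good s := uniq s /\ forall w, w \in s -> Xhat B d w /\ inbox lo len w.
pose sized k := `[< exists s, good s /\ size s = k >].
have sized0 : exists k, sized k by exists 0%N; apply/asboolP; exists [::].
have sized_le k : sized k -> (k <= Num.truncn M)%N.
  move=> /asboolP [s [[us sbox] <-]]; have sM := size_Xhat_box len0 us sbox.
  by rewrite truncn_ge_nat ?sM // (le_trans (ler0n _ _) sM).
have [k /asboolP [s [[us sbox] sk]] kmax] := ex_maxnP sized0 sized_le.
exists s; split; last exact: size_Xhat_box len0 us sbox.
move=> w Xw wbox; apply/negPn/negP => ws.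
have /kmax : sized (size (w :: s)).
  apply/asboolP; exists (w :: s); split => //; split; first by rewrite /= ws us.
  by move=> z; rewrite inE => /orP[/eqP ->|/sbox].
by rewrite /= sk ltnn.
Qed.

End LatticePointCount.

Section Witness.
Variables (R : realType) (n : nat) (B : 'M[R]_n).
Variables (X : finType) (d : X -> 'rV[R]_n) (fRep : set (X * 'rV[R]_n)) (A : R).
Hypotheses (inf : is_infrastructure B d fRep) (corn : cornered B d fRep).
Hypothesis A1 : assumptionA1 B d fRep A.

Lemma Hgrid_shift_witness (q N L : nat) (eps : R) (s : seq 'rV[R]_n)
    (k : {ffun 'I_n -> 'I_L}) (v : 'I_n -> 'I_(q * N)) :
  (0 < N)%N -> (0 < L)%N -> 0 < eps -> eps <= 1 / (2 * N%:R * L%:R) ->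
  (forall w, Xhat B d w -> (forall j, - A - 1 <= w 0 j <= - A - 1 + (q%:R + A + 2)) ->
     w \in s) ->
  Hgrid B d fRep N eps (\row_i ((k i : nat)%:R / (N * L)%:R + (v i : nat)%:R / N%:R)) ->
  exists2 w, w \in s & exists i, k i \in shifts_near N L (w 0 i).
Proof.
move=> N0 L0 eps0 epsNL cover; set y := \row_i _ => Hy.
have NL0 : 0 < (N * L)%:R :> R by rewrite ltr0n muln_gt0 N0.
set u : R := 1 / (N * L)%:R.
have u0 : 0 < u by rewrite divr_gt0.
have u1 : u <= 1 by rewrite ler_pdivrMr // mul1r ler1n muln_gt0 N0.
have epsu : eps <= u / 2.
  rewrite (le_trans epsNL) // le_eqVlt; apply/orP; left; apply/eqP.
  by rewrite /u natrM; field; rewrite ?pnatr_eq0 -?lt0n ?N0 ?L0.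
have [|wh Xwh [whbox [i [m near]]]] := Hgrid_near_corner inf corn A1 Hy (dl := u / 4).
  by rewrite divr_gt0.
exists wh.
  apply: (cover _ Xwh) => j.
  have /andP[? ?] : 0 <= y 0 j <= q%:R by rewrite mxE; exact: shift_point_range.
  by have /andP[? ?] := whbox j; apply/andP; split; lra.
exists i; apply/asboolP; exists ((v i : nat)%:Z - m).
rewrite -/u (_ : _ - _ = y 0 i - wh 0 i - m%:~R / N%:R); first by lra.
rewrite mxE intrB -pmulrn; field.
by rewrite ?pnatr_eq0 -?lt0n ?muln_gt0 ?N0 ?L0.
Qed.

End Witness.

Section Arithmetic.
Variable R : realType.

Lemma ratio_ge_of_complement (T : finType) (P : pred T) (m : nat) (p : R) :
  #|T| = m -> (0 < m)%N -> #|[predC P]|%:R <= (1 - p) * m%:R ->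
  p <= #|P|%:R / m%:R.
Proof.
move=> Tm m0 bad; rewrite ler_pdivlMr ?ltr0n //.
by move: bad; rewrite -Tm -(cardC P) natrD; lra.
Qed.

Lemma union_bound_arith (n L : nat) (S C D K p : R) :
  0 < C -> S <= D * (K / C) ^+ n -> 0 < p < 1 ->
  2 * n%:R * D * K ^+ n / ((1 - p) * C ^+ n) <= L%:R ->
  S * (n%:R * (2 * (L ^ n.-1)%:R)) <= (1 - p) * (L ^ n)%:R.
Proof.
case: n => [|n] C0 SDK /andP[p0 p1] hL; first by rewrite mul0r mulr0 mulr1; lra.
have key : S * (n.+1%:R * 2) <= (1 - p) * L%:R.
  apply: le_trans (ler_wpM2r _ SDK) _; first by rewrite mulr_ge0 ?ler0n.
  have -> : D * (K / C) ^+ n.+1 * (n.+1%:R * 2) =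
            (1 - p) * (2 * n.+1%:R * D * K ^+ n.+1 / ((1 - p) * C ^+ n.+1)).
    rewrite expr_div_n; field.
    by rewrite expf_neq0 ?(gt_eqF C0) // subr_eq0 eq_sym (lt_eqF p1).
  by apply: ler_wpM2l; lra.
rewrite /= expnS natrM !mulrA; apply: ler_wpM2r; first exact: ler0n.
by rewrite -mulrA.
Qed.

End Arithmetic.

Theorem proposition4p2 (R : realType) (n : nat) (B : 'M[R]_n) (X : finType)
    (d : X -> 'rV[R]_n) (fRep : set (X * 'rV[R]_n)) (A C D : R)
    (q N L : nat) (p eps : R) :
  is_infrastructure B d fRep ->
  cornered B d fRep ->
  assumptionA1 B d fRep A ->
  assumptionA2 B d C D ->
  (1 <= q)%N -> (1 <= N)%N -> 0 < p < 1 ->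
  2 * n%:R * D * (q%:R + A + C + 2) ^+ n / ((1 - p) * C ^+ n) <= L%:R ->
  0 < eps -> eps <= 1 / (2 * N%:R * L%:R) ->
  p <= #|[pred k : {ffun 'I_n -> 'I_L} |
           `[< forall v : 'I_n -> 'I_(q * N),
                 ~ Hgrid B d fRep N eps
                     (\row_i ((k i)%:R / (N * L)%:R + (v i)%:R / N%:R)) >]]|%:R
       / (L ^ n)%:R.
Proof.
move=> inf corn A1 A2 _ N0 p01 hL eps0 epsNL.
have [C0 _ _] := A2; have [A0 _] := A1.
have L0 : (0 < L)%N.
  by rewrite lt0n; apply/eqP => L0; move: epsNL; rewrite L0 mulr0n mulr0 invr0 mulr0; lra.
have [|s [cover size_s]] := Xhat_box_enum A2 (- A - 1) (len := q%:R + A + 2).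
  by have := ler0n R q; lra.
set Good := [pred k : {ffun 'I_n -> 'I_L} | _].
have bad : (#|[predC Good]| <= size s * (n * (2 * L ^ n.-1)))%N.
  apply: (@card_hit_coord_le _ n L 2 s (fun w i => shifts_near N L (w 0 i))) => [w i|k].
    exact: card_shifts_near.
  rewrite !inE => /asboolPn /existsNP [v /contrapT Hv].
  have [w ws hit] := Hgrid_shift_witness inf corn A1 N0 L0 eps0 epsNL cover Hv.
  by exists w.
apply: ratio_ge_of_complement; first by rewrite card_ffun !card_ord.
  by rewrite expn_gt0 L0.
rewrite addrAC in size_s; apply: le_trans (union_bound_arith C0 size_s p01 hL).
by move: bad; rewrite -(ler_nat R) !natrM.
Qed.
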